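(* Let $r,s$ be positive integers, let $u<v<w$ be three points of $\mathbb{Z}^2$ in the same equivalence class, and let $P$ be a lattice path. Suppose that $P$ passes strictly west of $u$, weakly east of $v$, and weakly west of $w$. Then $P$ is invalid.
   Context: A lattice path is a path in $\mathbb{Z}^2$ consisting of unit steps north ($N$-steps, adding $(0,1)$) and east ($E$-steps, adding $(1,0)$). For fixed positive integers $r,s$, points $v,w\in\mathbb{Z}^2$ are equivalent if $v-w=\ell(r,s)$ for some $\ell\in\mathbb{Z}$; $[v]$ denotes the class of $v$. A lattice path $P$ is valid if whenever $P$ enters a point $v$ with an $E$-step, every later point of $P$ in $[v]$ is also entered by an $E$-step; otherwise it is invalid. $\mathbb{Z}^2$ is partially ordered componentwise: $(x,y)\le(x',y')$ iff $x\le x'$ and $y\le y'$ (and $<$ means $\le$ and $\neq$). A path $P$ passes strictly west of a point $v$ if there is a point $v'$ of $P$ with the same $y$-coordinate as $v$ and $v'<v$. $P$ passes weakly west of $v$ if $P$ has at least one point with the same $y$-coordinate as $v$ and every such point $v'$ satisfies $v'\le v$. $P$ passes weakly east of $v$ if $P$ has at least one point with the same $y$-coordinate as $v$ and every such point $v'$ satisfies $v'\ge v$. *)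

From Stdlib Require Import ZArith List Lia.
Open Scope Z_scope.

Inductive step := Nstep | Estep.

Definition point := (Z * Z)%type.

Definition move (p : point) (st : step) : point :=
  match st with
  | Nstep => (fst p, snd p + 1)
  | Estep => (fst p + 1, snd p)
  end.

Record lpath := LPath { start : point ; steps : list step }.

Fixpoint pts_from (p : point) (l : list step) : list point :=
  match l with
  | nil => p :: nil
  | st :: l' => p :: pts_from (move p st) l'
  end.

Definition points (P : lpath) : list point := pts_from (start P) (steps P).

Definition pt (P : lpath) (i : nat) : point := nth i (points P) (0, 0).

Definition entered_by_E (P : lpath) (i : nat) : Prop :=
  (1 <= i)%nat /\ nth_error (steps P) (i - 1) = Some Estep.

Definition equivZ (r s : Z) (v w : point) : Prop :=
  exists l : Z, fst v - fst w = l * r /\ snd v - snd w = l * s.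

Definition valid (r s : Z) (P : lpath) : Prop :=
  forall i j : nat, (i < j)%nat -> (j <= length (steps P))%nat ->
    entered_by_E P i -> equivZ r s (pt P i) (pt P j) -> entered_by_E P j.

Definition invalid (r s : Z) (P : lpath) : Prop := ~ valid r s P.

Definition ple (v w : point) : Prop := fst v <= fst w /\ snd v <= snd w.
Definition plt (v w : point) : Prop := ple v w /\ v <> w.

Definition passes_strictly_west (P : lpath) (v : point) : Prop :=
  exists v', In v' (points P) /\ snd v' = snd v /\ plt v' v.

Definition passes_weakly_west (P : lpath) (v : point) : Prop :=
  (exists v', In v' (points P) /\ snd v' = snd v) /\
  (forall v', In v' (points P) -> snd v' = snd v -> ple v' v).

Definition passes_weakly_east (P : lpath) (v : point) : Prop :=
  (exists v', In v' (points P) /\ snd v' = snd v) /\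
  (forall v', In v' (points P) -> snd v' = snd v -> ple v v').

From Stdlib Require Import ZArith List Lia.
Open Scope Z_scope.

(* Let L(y) be the abscissa at which P enters row y; the points of P on row y
   are then L(y), ..., L(y+1).  On a valid path L(y) < L(y+s) - r <= L(y+1) is
   impossible: the point (L(y+s) - r, y) would be entered by an E-step while the
   equivalent later point (L(y+s), y+s) is entered by an N-step.  Hence
   L(y) + r < L(y+s), once true, stays true on every higher row.  Along the line
   through u, v, w the quantity L(u_y + k s) - k r is below u_x at k = 0 and at
   least u_x at v, so it increases somewhere before v, hence at every later step,
   and ends strictly above u_x at w, contradicting that P passes weakly west
   of w. *)

Section RowStartProfile.

Variables (L : Z -> Z) (lo hi r s : Z).
Hypothesis s_ge0 : 0 <= s.
Hypothesis L_mono : forall y, lo <= y -> y + 1 <= hi -> L y <= L (y + 1).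
Hypothesis L_no_gap :
  forall y, lo <= y -> y + s <= hi -> ~ (L y < L (y + s) - r <= L (y + 1)).

Lemma excess_succ y : lo <= y -> y + 1 + s <= hi ->
  L y + r < L (y + s) -> L (y + 1) + r < L (y + 1 + s).
Proof.
  intros Hlo Hhi Hex.
  assert (Hgap := L_no_gap y Hlo ltac:(lia)).
  assert (Hmono := L_mono (y + s) ltac:(lia) ltac:(lia)).
  replace (y + 1 + s) with (y + s + 1) by ring.
  lia.
Qed.

Lemma excess_persists y d : lo <= y -> L y + r < L (y + s) -> 0 <= d ->
  y + d + s <= hi -> L (y + d) + r < L (y + d + s).
Proof.
  intros Hlo Hex Hd; pattern d; apply natlike_ind; [| | exact Hd].
  - now rewrite Z.add_0_r.
  - intros d' Hd' IH Hhi.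
    replace (y + Z.succ d') with (y + d' + 1) by ring.
    apply excess_succ; [lia | lia | apply IH; lia].
Qed.

Lemma excess_at_first_rise y A : lo <= y -> 0 <= A ->
  y + A * s + s <= hi -> L y + A * r < L (y + A * s) ->
  L (y + A * s) + r < L (y + A * s + s).
Proof.
  intros Hlo HA; pattern A; apply natlike_ind; [| | exact HA].
  - rewrite !Z.mul_0_l, !Z.add_0_r; lia.
  - intros A' HA' IH Hhi Hrise.
    rewrite !Z.mul_succ_l, !Z.add_assoc in *.
    destruct (Z_lt_le_dec (L (y + A' * s) + r) (L (y + A' * s + s))) as [Hex | Hflat].
    + exact (excess_persists (y + A' * s) s ltac:(nia) Hex s_ge0 ltac:(lia)).
    + assert (Hex := IH ltac:(lia) ltac:(lia)). lia.
Qed.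

Lemma excess_telescopes y k : lo <= y -> L y + r < L (y + s) -> 0 <= k ->
  y + k * s + s <= hi -> L y + k * r + r < L (y + k * s + s).
Proof.
  intros Hlo Hex Hk; pattern k; apply natlike_ind; [| | exact Hk].
  - intros _. now rewrite !Z.mul_0_l, !Z.add_0_r.
  - intros k' Hk' IH Hhi.
    rewrite !Z.mul_succ_l in *.
    assert (Hex' := excess_persists y (k' * s + s) Hlo Hex ltac:(nia) ltac:(lia)).
    rewrite !Z.add_assoc in *.
    assert (IH' := IH ltac:(lia)).
    lia.
Qed.

Lemma row_start_stays_ahead y x A B : lo <= y -> 0 <= A -> 1 <= B ->
  y + A * s + B * s <= hi ->
  L y < x -> x + A * r <= L (y + A * s) ->
  x + A * r + B * r < L (y + A * s + B * s).
Proof.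
  intros Hlo HA HB Hhi Hu Hv.
  assert (Hex := excess_at_first_rise y A Hlo HA ltac:(nia) ltac:(lia)).
  assert (Hacc := excess_telescopes (y + A * s) (B - 1) ltac:(nia) Hex
                    ltac:(lia) ltac:(nia)).
  replace (y + A * s + (B - 1) * s + s) with (y + A * s + B * s) in Hacc by ring.
  nia.
Qed.

End RowStartProfile.

Fixpoint first_reach (f : nat -> Z) (y : Z) (n : nat) : nat :=
  match n with
  | O => O
  | S m => let k := first_reach f y m in if y <=? f k then k else S m
  end.

Lemma first_reach_spec f y n : let k := first_reach f y n in
  (k <= n)%nat /\ (forall j, (j < k)%nat -> f j < y) /\ (k = n \/ y <= f k).
Proof.
  induction n as [|m [Hle [Hbelow Hreach]]]; simpl.
  - split; [lia | split; [lia | now left]].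
  - destruct (Z.leb_spec y (f (first_reach f y m))) as [Hy | Hy].
    + split; [lia | split; [exact Hbelow | now right]].
    + destruct Hreach as [Hm | Hm]; [| lia].
      split; [lia | split; [| now left]].
      intros j Hj. destruct (Nat.eq_dec j m) as [-> | Hjm].
      * now rewrite <- Hm.
      * apply Hbelow; lia.
Qed.

Lemma pts_from_length l p : length (pts_from p l) = S (length l).
Proof. revert p; induction l; simpl; congruence. Qed.

Lemma pts_from_succ l p m st : nth_error l m = Some st ->
  nth (S m) (pts_from p l) (0, 0) = move (nth m (pts_from p l) (0, 0)) st.
Proof.
  revert p m; induction l as [|a l IH]; intros p [|m] Hst; try discriminate.
  - injection Hst as <-. now destruct l.
  - exact (IH _ _ Hst).
Qed.

Section PathRows.

Variable P : lpath.

Definition xc (m : nat) : Z := fst (pt P m).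
Definition yc (m : nat) : Z := snd (pt P m).
Let n := length (steps P).

Lemma step_cases m : (m < n)%nat ->
  (nth_error (steps P) m = Some Estep /\ xc (S m) = xc m + 1 /\ yc (S m) = yc m) \/
  (nth_error (steps P) m = Some Nstep /\ xc (S m) = xc m /\ yc (S m) = yc m + 1).
Proof.
  intros Hm. destruct (nth_error (steps P) m) as [st|] eqn:Hst.
  - unfold xc, yc, pt, points. rewrite (pts_from_succ _ _ _ _ Hst).
    destruct st; [right | left]; auto.
  - apply nth_error_None in Hst. unfold n in Hm. lia.
Qed.

Lemma xc_add_yc m : (m <= n)%nat -> xc m + yc m = xc 0 + yc 0 + Z.of_nat m.
Proof.
  induction m as [|m IH]; intros Hm; [lia|].
  destruct (step_cases m ltac:(lia)) as [[_ [-> ->]] | [_ [-> ->]]];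
    specialize (IH ltac:(lia)); lia.
Qed.

Lemma yc_mono m m' : (m <= m' <= n)%nat -> yc m <= yc m'.
Proof.
  intros [Hmm' Hm']. induction Hmm' as [|m' Hmm' IH]; [lia|].
  destruct (step_cases m' ltac:(lia)) as [[_ [_ ->]] | [_ [_ ->]]];
    specialize (IH ltac:(lia)); lia.
Qed.

Lemma entered_by_E_same_row m : (m < n)%nat ->
  entered_by_E P (S m) <-> yc (S m) = yc m.
Proof.
  intros Hm. unfold entered_by_E. rewrite Nat.sub_1_r. simpl.
  destruct (step_cases m Hm) as [[-> [_ ->]] | [-> [_ ->]]].
  - split; [easy | split; [lia | easy]].
  - split; [intros [_ ?]; discriminate | lia].
Qed.

Definition row_entry (y : Z) : nat := first_reach yc y n.
Definition row_start (y : Z) : Z := xc (row_entry y).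

Lemma row_entry_spec y : yc 0 <= y <= yc n ->
  (row_entry y <= n)%nat /\ yc (row_entry y) = y /\
  (forall j, (j < row_entry y)%nat -> yc j < y).
Proof.
  intros Hy. destruct (first_reach_spec yc y n) as [Hle [Hbelow Hreach]].
  fold (row_entry y) in *.
  split; [exact Hle | split; [| exact Hbelow]].
  assert (Hge : y <= yc (row_entry y)) by (destruct Hreach as [-> | ?]; lia).
  destruct (row_entry y) as [|k]; [lia|].
  assert (Hk := Hbelow k ltac:(lia)).
  destruct (step_cases k ltac:(lia)) as [[_ [_ Hs]] | [_ [_ Hs]]]; lia.
Qed.

Lemma row_start_formula y : yc 0 <= y <= yc n ->
  row_start y = xc 0 + yc 0 + Z.of_nat (row_entry y) - y.
Proof.
  intros Hy. destruct (row_entry_spec y Hy) as [Hle [Hrow _]].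
  unfold row_start. assert (Hsum := xc_add_yc _ Hle). lia.
Qed.

Lemma lt_row_entry m y : (m <= n)%nat -> yc m < y -> y <= yc n ->
  (m < row_entry y)%nat.
Proof.
  intros Hm Hlt Hy.
  assert (Hlo := yc_mono 0 m ltac:(lia)).
  destruct (row_entry_spec y ltac:(lia)) as [Hle [Hrow _]].
  destruct (Nat.lt_ge_cases m (row_entry y)) as [|Hge]; [assumption|].
  assert (Hmono := yc_mono _ _ (conj Hge Hm)). lia.
Qed.

Lemma row_start_mono y : yc 0 <= y -> y + 1 <= yc n ->
  row_start y <= row_start (y + 1).
Proof.
  intros Hlo Hhi.
  destruct (row_entry_spec y ltac:(lia)) as [Hle [Hrow _]].
  assert (Hlt := lt_row_entry (row_entry y) (y + 1) Hle ltac:(lia) Hhi).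
  rewrite !row_start_formula by lia. lia.
Qed.

Lemma pt_In_points m : (m <= n)%nat -> In (pt P m) (points P).
Proof.
  intros Hm. apply nth_In. unfold points. rewrite pts_from_length. unfold n in Hm. lia.
Qed.

Lemma In_points_pt q : In q (points P) -> exists m, (m <= n)%nat /\ pt P m = q.
Proof.
  intros Hq. destruct (In_nth _ _ (0, 0) Hq) as [m [Hm Hpt]].
  unfold points in Hm. rewrite pts_from_length in Hm.
  exists m. split; [unfold n; lia | exact Hpt].
Qed.

Lemma row_of_point_in_range q : In q (points P) -> yc 0 <= snd q <= yc n.
Proof.
  intros Hq. destruct (In_points_pt q Hq) as [m [Hm <-]].
  split; apply yc_mono; lia.
Qed.

Lemma row_start_le_point q : In q (points P) -> row_start (snd q) <= fst q.
Proof.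
  intros Hq. assert (Hrange := row_of_point_in_range q Hq).
  destruct (In_points_pt q Hq) as [m [Hm <-]]. fold (yc m) (xc m) in *.
  destruct (row_entry_spec (yc m) Hrange) as [_ [_ Hbelow]].
  assert (Hentry : (row_entry (yc m) <= m)%nat).
  { destruct (Nat.le_gt_cases (row_entry (yc m)) m) as [|Hgt]; [assumption|].
    specialize (Hbelow m Hgt). lia. }
  rewrite row_start_formula by exact Hrange.
  assert (Hsum := xc_add_yc m Hm). lia.
Qed.

Lemma row_start_point y : yc 0 <= y <= yc n ->
  In (row_start y, y) (points P).
Proof.
  intros Hy. destruct (row_entry_spec y Hy) as [Hle [Hrow _]].
  assert (Hpt : pt P (row_entry y) = (row_start y, y)).
  { unfold row_start, xc. unfold yc in Hrow.
    destruct (pt P (row_entry y)); simpl in *; congruence. }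
  rewrite <- Hpt. now apply pt_In_points.
Qed.

Lemma valid_row_start_no_gap r s : 0 < s -> valid r s P ->
  forall y, yc 0 <= y -> y + s <= yc n ->
  ~ (row_start y < row_start (y + s) - r <= row_start (y + 1)).
Proof.
  intros Hs Hval y Hlo Hhi [Hleft Hright].
  destruct (row_entry_spec y ltac:(lia)) as [He0 [Hy0 _]].
  destruct (row_entry_spec (y + 1) ltac:(lia)) as [He1 [_ Hbelow1]].
  destruct (row_entry_spec (y + s) ltac:(lia)) as [Hej [Hyj Hbelowj]].
  set (j := row_entry (y + s)) in *.
  rewrite !row_start_formula in Hleft, Hright by lia.
  (* the point (row_start (y + s) - r, y) lies s + r steps before j *)
  set (k := Z.to_nat (Z.of_nat j - (s + r))).
  assert (Hk : (row_entry y < k < row_entry (y + 1))%nat) by lia.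
  assert (Hyk : forall i, (row_entry y <= i <= k)%nat -> yc i = y).
  { intros i Hi. pose proof (yc_mono (row_entry y) i ltac:(lia)).
    pose proof (Hbelow1 i ltac:(lia)). lia. }
  assert (HE : entered_by_E P k).
  { replace k with (S (k - 1)) by lia.
    apply entered_by_E_same_row; [lia|].
    rewrite !Hyk by lia. reflexivity. }
  assert (Hkj : (k < j)%nat)
    by (apply lt_row_entry; [lia | rewrite Hyk by lia; lia | lia]).
  assert (Hequiv : equivZ r s (pt P k) (pt P j)).
  { exists (-1). fold (xc k) (yc k) (xc j) (yc j).
    pose proof (xc_add_yc k ltac:(lia)).
    rewrite (Hyk k) in * by lia.
    pose proof (xc_add_yc j Hej). lia. }
  assert (HEj := Hval k j Hkj Hej HE Hequiv).
  assert (Hj1 : (1 <= j)%nat) by apply HEj.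
  replace j with (S (j - 1)) in HEj by lia.
  apply entered_by_E_same_row in HEj; [| lia].
  replace (S (j - 1)) with j in HEj by lia.
  pose proof (Hbelowj (j - 1)%nat ltac:(lia)). lia.
Qed.

Lemma strictly_west_row_start v : passes_strictly_west P v -> row_start (snd v) < fst v.
Proof.
  intros [q [Hq [Hrow [[Hx _] Hneq]]]].
  assert (Hle := row_start_le_point q Hq). rewrite Hrow in Hle.
  destruct (Z.eq_dec (fst q) (fst v)) as [Hfst|]; [|lia].
  exfalso. apply Hneq. destruct q, v; simpl in *; congruence.
Qed.

Lemma weakly_east_row_start v : passes_weakly_east P v -> fst v <= row_start (snd v).
Proof.
  intros [[q [Hq Hrow]] Heast].
  assert (Hrange := row_of_point_in_range q Hq). rewrite Hrow in Hrange.
  exact (proj1 (Heast _ (row_start_point _ Hrange) eq_refl)).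
Qed.

Lemma weakly_west_row_start v : passes_weakly_west P v -> row_start (snd v) <= fst v.
Proof.
  intros [[q [Hq Hrow]] Hwest].
  assert (Hrange := row_of_point_in_range q Hq). rewrite Hrow in Hrange.
  exact (proj1 (Hwest _ (row_start_point _ Hrange) eq_refl)).
Qed.

End PathRows.

Lemma equivZ_plt_shift r s v w : 0 < s -> plt v w -> equivZ r s v w ->
  exists A, 0 < A /\ fst w = fst v + A * r /\ snd w = snd v + A * s.
Proof.
  intros Hs [[Hx Hy] Hneq] [l [Hlx Hly]].
  exists (- l).
  destruct (Z.eq_dec l 0) as [->|Hl].
  - exfalso. apply Hneq. destruct v, w; simpl in *; f_equal; lia.
  - nia.
Qed.

Theorem mainTheorem3 (r s : Z) (hr : 0 < r) (hs : 0 < s)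
  (u v w : point) (P : lpath)
  (huv : plt u v) (hvw : plt v w)
  (Euv : equivZ r s u v) (Evw : equivZ r s v w)
  (Hu : passes_strictly_west P u)
  (Hv : passes_weakly_east P v)
  (Hw : passes_weakly_west P w) :
  invalid r s P.
Proof.
  intros Hval.
  destruct (equivZ_plt_shift r s u v hs huv Euv) as [A [HA [Hvx Hvy]]].
  destruct (equivZ_plt_shift r s v w hs hvw Evw) as [B [HB [Hwx Hwy]]].
  assert (Hurow : yc P 0 <= snd u).
  { destruct Hu as [q [Hq [<- _]]]. apply row_of_point_in_range, Hq. }
  assert (Hwrow : snd w <= yc P (length (steps P))).
  { destruct Hw as [[q [Hq <-]] _]. apply row_of_point_in_range, Hq. }
  assert (Hv' : fst u + A * r <= row_start P (snd u + A * s)).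
  { rewrite <- Hvx, <- Hvy. exact (weakly_east_row_start P v Hv). }
  assert (Hahead := row_start_stays_ahead (row_start P) (yc P 0)
    (yc P (length (steps P))) r s ltac:(lia) (row_start_mono P)
    (valid_row_start_no_gap P r s hs Hval) (snd u) (fst u) A B Hurow
    ltac:(lia) ltac:(lia) ltac:(lia) (strictly_west_row_start P u Hu) Hv').
  replace (snd u + A * s + B * s) with (snd w) in Hahead by lia.
  pose proof (weakly_west_row_start P w Hw). lia.
Qed.
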